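(* Let $0<p_{\mathrm{gen}}<1$, $0<p_{\mathrm{swap}}\le1$. Let $T_0$ be either geometric on $\{1,2,\dots\}$ with parameter $p_{\mathrm{gen}}$ or exponential with $\Pr(T_0>x)=e^{-p_{\mathrm{gen}}x}$. For $n\ge0$ let $M_n=\max(T_n^{(1)},T_n^{(2)})$ (i.i.d. copies of $T_n$) and $T_{n+1}=\sum_{k=1}^{K}M_n^{(k)}$ with $M_n^{(k)}$ i.i.d. copies of $M_n$ and $K$ independent, geometric on $\{1,2,\dots\}$ with parameter $p_{\mathrm{swap}}$. Define $R_0=\max(T_0^{(1)},T_0^{(2)})$ and $R_{n+1}=\sum_{j=1}^{N}R_n^{(j)}$ with $R_n^{(j)}$ i.i.d. copies of $R_n$ and $N=\max(K^{(1)},K^{(2)})$ independent, $K^{(1)},K^{(2)}$ i.i.d. geometric on $\{1,2,\dots\}$ with parameter $p_{\mathrm{swap}}$. Then $M_n\ge_{\mathrm{st}}R_n$ for all $n\ge0$.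
   Context: A geometric random variable on $\{1,2,\dots\}$ with parameter $q$ satisfies $\Pr(K=k)=q(1-q)^{k-1}$. For random variables $X,Y$ with domains $D_X,D_Y\subseteq\mathbb{R}$, $X\ge_{\mathrm{st}}Y$ means $\Pr(X>z)\ge\Pr(Y>z)$ for all $z\in D_X\cap D_Y$. *)

From HB Require Import structures.
From mathcomp Require Import all_boot all_order all_algebra.
From mathcomp Require Import all_classical all_reals all_analysis.

Set Implicit Arguments.
Unset Strict Implicit.
Unset Printing Implicit Defensive.

Import Order.TTheory GRing.Theory Num.Theory.
Local Open Scope classical_set_scope.
Local Open Scope ring_scope.

Definition mutual_indep d (T : measurableType d) (R : realType)
    (P : probability T R) (I : eqType) (X : I -> T -> R) : Prop :=
  (forall i, measurable_fun setT (X i)) /\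
  forall (J : seq I) (A : I -> set R), uniq J -> (forall i, measurable (A i)) ->
    P [set w | forall i, i \in J -> A i (X i w)]
    = (\prod_(i <- J) P (X i @^-1` A i))%E.

Definition same_law d (T : measurableType d) (R : realType)
    (P : probability T R) (X Y : T -> R) : Prop :=
  forall A : set R, measurable A -> P (X @^-1` A) = P (Y @^-1` A).

Definition geometric_rv d (T : measurableType d) (R : realType)
    (P : probability T R) (q : R) (K : T -> nat) : Prop :=
  forall k : nat, (0 < k)%N -> P (K @^-1` [set k]) = (q * (1 - q) ^+ k.-1)%:E.

Definition geometric_real d (T : measurableType d) (R : realType)
    (P : probability T R) (q : R) (X : T -> R) : Prop :=
  forall k : nat, (0 < k)%N ->
    P (X @^-1` [set k%:R]) = (q * (1 - q) ^+ k.-1)%:E.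

Definition exponential_real d (T : measurableType d) (R : realType)
    (P : probability T R) (q : R) (X : T -> R) : Prop :=
  forall x : R, 0 <= x -> P [set w | x < X w] = (expR (- (q * x)))%:E.

Definition is_max2_law d (T : measurableType d) (R : realType)
    (P : probability T R) (X Y : T -> R) : Prop :=
  exists X12 : bool -> T -> R,
    mutual_indep P X12 /\ (forall b, same_law P (X12 b) X) /\
    same_law P Y (fun w => Num.max (X12 true w) (X12 false w)).

Definition is_geom_sum_law d (T : measurableType d) (R : realType)
    (P : probability T R) (q : R) (X Y : T -> R) : Prop :=
  exists (K : T -> nat) (Xs : nat -> T -> R),
    mutual_indep P (fun i : option nat =>
      match i with None => fun w => (K w)%:R | Some k => Xs k end) /\
    geometric_rv P q K /\ (forall k, same_law P (Xs k) X) /\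
    same_law P Y (fun w => \sum_(k < K w) Xs k w).

Definition is_maxgeom_sum_law d (T : measurableType d) (R : realType)
    (P : probability T R) (q : R) (X Y : T -> R) : Prop :=
  exists (K : bool -> T -> nat) (Xs : nat -> T -> R),
    mutual_indep P (fun i : bool + nat =>
      match i with inl b => fun w => (K b w)%:R | inr j => Xs j end) /\
    (forall b, geometric_rv P q (K b)) /\ (forall j, same_law P (Xs j) X) /\
    same_law P Y (fun w => \sum_(j < maxn (K true w) (K false w)) Xs j w).

From HB Require Import structures.
From mathcomp Require Import all_boot all_order all_algebra.
From mathcomp Require Import all_classical all_reals all_analysis.
From mathcomp Require Import ring lra.

(* Since Pr(X > z) = 1 - Pr(X <= z), it suffices to show
   Pr(M_n <= z) <= Pr(R_n <= z) for all z, by induction on n.  For n = 0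
   both M_0 and R_0 have the law of the maximum of two i.i.d. copies of T_0.  For the step, write p_m = Pr(K = m),
   G_m = Pr(M^(1) + ... + M^(m) <= z) and H_m = Pr(R^(1) + ... + R^(m) <= z).
   Then
     Pr(M_{n+1} <= z) = Pr(T_{n+1} <= z)^2 = (sum_a p_a G_a)^2,
     Pr(R_{n+1} <= z) = sum_a sum_b p_a p_b H_(max a b).
   The induction hypothesis gives G_m <= H_m, because a sum of independent
   variables is monotone in each summand for the stochastic order (its
   distribution function is a convolution), and G_a G_b <= G_(max a b)
   because G takes values in [0, 1]; this yields the inequality. *)

Import Order.TTheory GRing.Theory Num.Theory.
Local Open Scope classical_set_scope.
Local Open Scope ring_scope.

Section ProbabilityBasics.
Context {d : measure_display} {T : measurableType d} {R : realType}
  {P : probability T R}.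
Local Open Scope ereal_scope.

Lemma prob_fin {A : set T} : measurable A -> P A = (fine (P A))%:E.
Proof.
move=> mA; rewrite fineK // ge0_fin_numE //.
by rewrite (le_lt_trans (probability_le1 _ mA)) // ltey.
Qed.

Lemma prob_fine01 {A : set T} : measurable A -> (0 <= fine (P A) <= 1)%R.
Proof.
by move=> mA; rewrite fine_ge0 //= -lee_fin -prob_fin //; exact: probability_le1.
Qed.

Lemma preim_itv_le (U : T -> R) t :
  U @^-1` `]-oo, t]%classic = [set w | (U w <= t)%R].
Proof. by apply/seteqP; split => w /=; rewrite in_itv. Qed.

Lemma cdf_measurable {U : T -> R} : measurable_fun setT U ->
  forall z, measurable [set w | (U w <= z)%R].
Proof.
move=> mU z; rewrite -preim_itv_le -[X in measurable X]setTI.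
exact: mU.
Qed.

Lemma same_law_cdf {X Y : T -> R} : same_law P X Y ->
  forall z, P [set w | (X w <= z)%R] = P [set w | (Y w <= z)%R].
Proof. by move=> h z; rewrite -!preim_itv_le; apply: h; exact: measurable_itv. Qed.

Lemma tail_le_of_cdf_ge {X Y : T -> R} :
  measurable_fun setT X -> measurable_fun setT Y ->
  (forall z, P [set w | (X w <= z)%R] <= P [set w | (Y w <= z)%R]) ->
  forall z, P [set w | (z < Y w)%R] <= P [set w | (z < X w)%R].
Proof.
move=> mX mY le_cdf z.
have tailE (U : T -> R) : [set w | (z < U w)%R] = ~` [set w | (U w <= z)%R].
  by apply/seteqP; split => w /=; rewrite ltNge => /negP.
have mXz := cdf_measurable mX z; have mYz := cdf_measurable mY z.
rewrite !tailE !probability_setC // (prob_fin mXz) (prob_fin mYz) -!EFinB lee_fin.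
by have := le_cdf z; rewrite (prob_fin mXz) (prob_fin mYz) lee_fin; lra.
Qed.

Lemma nat_eventE (K : T -> nat) m :
  [set w | K w = m] = (fun w => (K w)%:R : R) @^-1` [set (m%:R : R)].
Proof. by apply/seteqP; split => w /= => [->|/eqP]; rewrite ?eqr_nat => // /eqP. Qed.

Lemma nat_event_measurable {K : T -> nat} :
  measurable_fun setT (fun w => (K w)%:R : R) ->
  forall m, measurable [set w | K w = m].
Proof.
move=> mK m; rewrite nat_eventE -[X in measurable X]setTI.
by apply: mK => //; exact: measurable_set1.
Qed.

(* Selecting, pointwise, one of countably many events E m according to the
   value of an integer variable N; this is how the random number of summands
   enters. *)
Lemma nat_selectE (N : T -> nat) (E : nat -> set T) :
  [set w | E (N w) w] = \bigcup_m ([set w | N w = m] `&` E m).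
Proof.
apply/seteqP; split => w /= => [hw|[m _ [/= -> //]]].
by exists (N w).
Qed.

Lemma nat_select_measurable (N : T -> nat) (E : nat -> set T) :
  (forall m, measurable [set w | N w = m]) -> (forall m, measurable (E m)) ->
  measurable [set w | E (N w) w].
Proof.
move=> mN mE; rewrite nat_selectE.
by apply: bigcup_measurable => m _; exact: measurableI.
Qed.

Lemma prob_decomp_nat (N : T -> nat) (E : nat -> set T) :
  (forall m, measurable [set w | N w = m]) -> (forall m, measurable (E m)) ->
  P [set w | E (N w) w] = \sum_(m <oo) P ([set w | N w = m] `&` E m).
Proof.
move=> mN mE; rewrite nat_selectE.
apply: measure_semi_bigcup => [m|i j _ _ [w [[/= <- _] [/= <- _]]] //|].
- exact: measurableI.
- by rewrite -nat_selectE; exact: nat_select_measurable.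
Qed.

Lemma prob_decomp_nat2 (N1 N2 : T -> nat) (E : nat -> nat -> set T) :
  (forall m, measurable [set w | N1 w = m]) ->
  (forall m, measurable [set w | N2 w = m]) -> (forall a b, measurable (E a b)) ->
  P [set w | E (N1 w) (N2 w) w] = \sum_(a <oo) \sum_(b <oo)
    P ([set w | N1 w = a] `&` [set w | N2 w = b] `&` E a b).
Proof.
move=> mN1 mN2 mE.
rewrite (prob_decomp_nat _ (fun a => [set w | E a (N2 w) w])) //; last first.
  by move=> a; exact: nat_select_measurable.
apply: eq_eseriesr => a _.
rewrite (prob_decomp_nat N2 (fun b => [set w | N1 w = a] `&` E a b)) //; last first.
  by move=> b; exact: measurableI.
by apply: eq_eseriesr => b _; rewrite setIA (setIC [set w | N2 w = b]).
Qed.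

(* Two geometric variables on {1,2,...} with the same parameter have the same
   law; the mass at 0 is determined as the complement of the others. *)
Lemma geometric_law_unique {q : R} {K K' : T -> nat} :
  measurable_fun setT (fun w => (K w)%:R : R) ->
  measurable_fun setT (fun w => (K' w)%:R : R) ->
  geometric_rv P q K -> geometric_rv P q K' ->
  forall m, P [set w | K w = m] = P [set w | K' w = m].
Proof.
move=> mK mK' gK gK'.
have pos k : (0 < k)%N -> P [set w | K w = k] = P [set w | K' w = k].
  by move=> k0; rewrite [LHS]gK // gK'.
case=> [|m]; last exact: pos.
pose D := [set k : nat | (0 < k)%N].
have massE (L : T -> nat) : measurable_fun setT (fun w => (L w)%:R : R) ->
    P [set w | L w = 0%N] = 1 - \sum_(0 <= i <oo | i \in D) P [set w | L w = i].
  move=> mL; have mLk := nat_event_measurable mL.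
  have -> : [set w | L w = 0%N] = ~` \bigcup_(k in D) [set w | L w = k].
    apply/seteqP; split => w /= => [L0 [k /= k0 Lk]|notD].
      by move: k0; rewrite -Lk L0.
    by apply/eqP; rewrite -leqn0 leqNgt; apply/negP => L0; apply: notD; exists (L w).
  rewrite probability_setC; last by apply: bigcup_measurable => k _.
  rewrite measure_bigcup //; apply/trivIsetP => i j _ _ ij.
  by apply/seteqP; split => // w [/= -> h]; move: ij; rewrite h eqxx.
rewrite (massE K mK) (massE K' mK'); congr (_ - _); apply: eq_eseriesr => k.
by rewrite inE => /pos.
Qed.

End ProbabilityBasics.

Section IndependenceExtension.
Context {d : measure_display} {T : measurableType d} {R : realType}
  {P : probability T R}.
Local Open Scope ereal_scope.

Definition indep_with (B : set T) : set (set T) :=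
  [set E | measurable E /\ P (E `&` B) = P E * P B].

Lemma indep_with_dynkin B : measurable B -> dynkin (indep_with B).
Proof.
move=> mB; split.
- by split => //; rewrite setTI probability_setT mul1e.
- move=> E [mE hE]; split; first exact: measurableC.
  have -> : ~` E `&` B = B `\` E by rewrite setDE setIC.
  rewrite probability_setC // measureD //; last first.
    by rewrite (le_lt_trans (probability_le1 _ mB)) // ltey.
  change (P B - P (B `&` E) = (1 - P E) * P B).
  rewrite (setIC B E) hE (prob_fin mE) (prob_fin mB).
  by rewrite -EFinM -!EFinB -EFinM; congr (_%:E); ring.
- move=> F tF hF; have mF k : measurable (F k) by case: (hF k).
  split; first exact: bigcup_measurable.
  have tFB : trivIset setT (fun k => F k `&` B).
    apply/trivIsetP => i j _ _ ij; rewrite setIACA setIid.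
    by move/trivIsetP : tF => /(_ i j I I ij) ->; rewrite set0I.
  rewrite setI_bigcupl !measure_semi_bigcup //; last 3 first.
  + exact: bigcup_measurable.
  + by move=> k; exact: measurableI.
  + by apply: bigcup_measurable => k _; exact: measurableI.
  rewrite (prob_fin mB) muleC -nneseriesZl //.
  by apply: eq_eseriesr => k _; rewrite muleC -prob_fin //; case: (hF k).
Qed.

Lemma sigma_sub_dynkin {G H : set (set T)} :
  setI_closed G -> dynkin H -> G `<=` H -> <<s G >> `<=` H.
Proof.
move=> GI dH GH; rewrite -setI_closed_g_dynkin_g_sigma_algebra //.
exact: smallest_sub.
Qed.

End IndependenceExtension.

Section MutualIndependence.
Context {d : measure_display} {T : measurableType d} {R : realType}
  {P : probability T R} {I : eqType} {X : I -> T -> R}.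
Hypothesis hX : mutual_indep P X.
Local Open Scope ereal_scope.

(* The cylinder events determined by the coordinates in J; they generate the
   sigma-algebra of the subfamily (X i)_{i in J}. *)
Definition cylinder (J : seq I) : set (set T) :=
  [set E | exists A : I -> set R, (forall i, measurable (A i)) /\
     E = [set w | forall i, i \in J -> A i (X i w)]].

Lemma cylinder_set_measurable (J : seq I) (A : I -> set R) :
  (forall i, measurable (A i)) ->
  measurable [set w | forall i, i \in J -> A i (X i w)].
Proof.
move=> mA; elim: J => [|j J IH].
  by rewrite (_ : [set w | _] = setT) //; apply/seteqP; split => // w _ i.
have -> : [set w | forall i, i \in j :: J -> A i (X i w)] =
    (setT `&` X j @^-1` A j) `&` [set w | forall i, i \in J -> A i (X i w)].
  apply/seteqP; split => w /= => [h|[[_ hj] hJ] i].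
    split; first by split=> //; apply: h; rewrite inE eqxx.
    by move=> i iJ; apply: h; rewrite inE iJ orbT.
  by rewrite inE => /orP[/eqP->|/hJ].
by apply: measurableI => //; exact: (hX.1 j).
Qed.

Lemma cylinder_measurable {J : seq I} : cylinder J `<=` measurable.
Proof. by move=> E [A [mA ->]]; exact: cylinder_set_measurable. Qed.

Lemma cylinder_setI_closed (J : seq I) : setI_closed (cylinder J).
Proof.
move=> E F [A [mA ->]] [B [mB ->]]; exists (fun i => A i `&` B i).
split; first by move=> i; exact: measurableI.
apply/seteqP; split => w /= => [[hA hB] i iJ|h]; first by split; [exact: hA|exact: hB].
by split => i iJ; have [] := h i iJ.
Qed.

Lemma cylinder_indep {J1 J2 : seq I} : uniq (J1 ++ J2) ->
  forall {E F}, cylinder J1 E -> cylinder J2 F -> P (E `&` F) = P E * P F.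
Proof.
move=> u E F [A [mA ->]] [B [mB ->]].
have [u1 u2 disj] : [/\ uniq J1, uniq J2 & forall i, i \in J2 -> i \notin J1].
  by move: u; rewrite cat_uniq => /and3P[u1 /hasPn disj u2]; split=> // i /disj.
pose C i := if i \in J1 then A i else B i.
have mC i : measurable (C i) by rewrite /C; case: ifP.
have -> : [set w | forall i, i \in J1 -> A i (X i w)] `&`
          [set w | forall i, i \in J2 -> B i (X i w)] =
          [set w | forall i, i \in J1 ++ J2 -> C i (X i w)].
  apply/seteqP; split => w /= => [[h1 h2] i|h].
    rewrite mem_cat /C => /orP[iJ|iJ]; first by rewrite iJ; exact: h1.
    by rewrite (negbTE (disj i iJ)); exact: h2.
  split => i iJ; have := h i; rewrite mem_cat iJ ?orbT /C; first by rewrite iJ; apply.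
  by rewrite (negbTE (disj i iJ)); apply.
rewrite !hX.2 // big_cat /=; congr (_ * _); apply: eq_big_seq => i iJ; rewrite /C.
  by rewrite iJ.
by rewrite (negbTE (disj i iJ)).
Qed.

Lemma generated_measurable {J : seq I} : <<s cylinder J >> `<=` measurable.
Proof.
apply: smallest_sub; last exact: cylinder_measurable.
exact: sigma_algebra_measurable.
Qed.

Lemma generated_indep {J1 J2 : seq I} : uniq (J1 ++ J2) ->
  forall {E F}, <<s cylinder J1 >> E -> <<s cylinder J2 >> F ->
  P (E `&` F) = P E * P F.
Proof.
move=> u.
have gen_cyl F : cylinder J2 F -> <<s cylinder J1 >> `<=` indep_with (P := P) F.
  move=> cF; apply: sigma_sub_dynkin; first exact: cylinder_setI_closed.
    by apply: indep_with_dynkin; exact: cylinder_measurable cF.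
  by move=> E cE; split; [exact: cylinder_measurable cE|exact (cylinder_indep u cE cF)].
move=> E F gE gF.
suff [_ ] : indep_with (P := P) E F by rewrite setIC muleC.
apply: (sigma_sub_dynkin (cylinder_setI_closed J2) _ _ _ gF).
  by apply: indep_with_dynkin; exact: generated_measurable gE.
move=> G cG; split; first exact: cylinder_measurable cG.
by have [_] := gen_cyl G cG E gE; rewrite setIC muleC.
Qed.

Lemma coordinate_generated_measurable {J : seq I} {i : I} : i \in J ->
  measurable_fun [set: g_sigma_algebraType (cylinder J)] (X i).
Proof.
move=> iJ _ B mB; rewrite setTI; apply: sub_sigma_algebra.
exists (fun k => if k == i then B else setT); split; first by move=> k; case: ifP.
apply/seteqP; split => w /= => [h k _|/(_ i iJ)]; last by rewrite eqxx.
by case: ifP => // /eqP ->.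
Qed.

Lemma generated_preimage (J : seq I) (f : T -> R) :
  measurable_fun [set: g_sigma_algebraType (cylinder J)] f ->
  forall B, measurable B -> <<s cylinder J >> (f @^-1` B).
Proof. by move=> mf B mB; have := mf measurableT B mB; rewrite setTI. Qed.

Definition partial_sum (e : nat -> I) (m : nat) (w : T) : R :=
  (\sum_(k < m) X (e k) w)%R.

Lemma partial_sumS e m : partial_sum e m.+1 = (partial_sum e m \+ X (e m))%R.
Proof. by apply/funext => w; rewrite /partial_sum big_ord_recr. Qed.

Lemma partial_sum0 e : partial_sum e 0 = cst 0%R.
Proof. by apply/funext => w; rewrite /partial_sum big_ord0. Qed.

Lemma partial_sum_generated_measurable (J : seq I) e m :
  (forall k, (k < m)%N -> e k \in J) ->
  measurable_fun [set: g_sigma_algebraType (cylinder J)] (partial_sum e m).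
Proof.
elim: m => [|m IH] eJ; first by rewrite partial_sum0; exact: measurable_cst.
rewrite partial_sumS; apply: measurable_realfun.measurable_funD.
  by apply: IH => k km; apply: eJ; rewrite ltnS ltnW.
by apply: coordinate_generated_measurable; exact: eJ.
Qed.

Lemma partial_sum_measurable e m : measurable_fun setT (partial_sum e m).
Proof.
elim: m => [|m IH]; first by rewrite partial_sum0; exact: measurable_cst.
by rewrite partial_sumS; apply: measurable_realfun.measurable_funD => //; exact: hX.1.
Qed.

Lemma partial_sum_cylinder (e : nat -> I) m z :
  <<s cylinder (map e (iota 0 m)) >> [set w | (partial_sum e m w <= z)%R].
Proof.
rewrite -preim_itv_le; apply: generated_preimage; last exact: measurable_itv.
by apply: partial_sum_generated_measurable => k km; apply: map_f; rewrite mem_iota.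
Qed.

Lemma partial_sum_indep e m : injective e -> forall A B,
  measurable A -> measurable B ->
  P (partial_sum e m @^-1` A `&` X (e m) @^-1` B) =
  P (partial_sum e m @^-1` A) * P (X (e m) @^-1` B).
Proof.
move=> ie A B mA mB.
have u : uniq (map e (iota 0 m) ++ [:: e m]).
  rewrite cat_uniq (map_inj_uniq ie) iota_uniq /= andbT orbF.
  apply/mapP => -[k]; rewrite mem_iota add0n => /andP[_ km] /ie km_eq.
  by move: km; rewrite km_eq ltnn.
apply: (generated_indep u).
  apply: generated_preimage => //; apply: partial_sum_generated_measurable => k km.
  by apply: map_f; rewrite mem_iota add0n km.
by apply: generated_preimage => //; apply: coordinate_generated_measurable; rewrite inE.
Qed.

End MutualIndependence.

Arguments partial_sum {d T R I} X e m w.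

Section Convolution.
Context {R : realType}.
Local Open Scope ereal_scope.

(* The distribution function of the sum of independent variables with laws
   mu and nu, as the product measure of a half-plane. *)
Definition sum_le_set (z : R) : set (R * R) := [set p | (p.1 + p.2 <= z)%R].

Lemma sum_le_set_measurable z : measurable (sum_le_set z).
Proof.
have mf : measurable_fun setT (fun p : R * R => p.1 + p.2)%R.
  by apply: measurable_realfun.measurable_funD; [exact: measurable_fst|exact: measurable_snd].
rewrite (_ : sum_le_set z = (fun p : R * R => p.1 + p.2)%R @^-1` `]-oo, z]).
  by rewrite -[X in measurable X]setTI; apply: mf => //; exact: measurable_itv.
by apply/seteqP; split => p /=; rewrite in_itv.
Qed.

Definition conv (mu nu : probability R R) z := (mu \x nu) (sum_le_set z).

Lemma conv_sym (mu nu : probability R R) z : conv mu nu z = conv nu mu z.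
Proof.
rewrite /conv (product_measure_unique (m' := mu \x^ nu)); last 2 first.
- by move=> A B mA mB; exact: product_measure2E.
- exact: sum_le_set_measurable.
apply: eq_integral => v _ /=; congr (mu _).
by apply/seteqP; split => u /=; rewrite /xsection /ysection /= !inE /sum_le_set /= => h; lra.
Qed.

Lemma conv_le (mu nu nu' : probability R R) z :
  (forall t, nu `]-oo, t]%classic <= nu' `]-oo, t]%classic) ->
  conv mu nu z <= conv mu nu' z.
Proof.
move=> le_nu; rewrite /conv /product_measure1; apply: ge0_le_integral => //.
- exact: measurable_fun_xsection (sum_le_set_measurable z).
- exact: measurable_fun_xsection (sum_le_set_measurable z).
move=> u _ /=.
have sectionE (m : probability R R) :
    m (xsection (sum_le_set z) u) = m `]-oo, (z - u)%R]%classic.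
  congr (m _); apply/seteqP; split => v /=;
    by rewrite /xsection /= inE /sum_le_set /= in_itv /= => h; lra.
by rewrite !sectionE.
Qed.

End Convolution.

Section SumsOfIndependent.
Context {d : measure_display} {T : measurableType d} {R : realType}
  {P : probability T R}.
Local Open Scope ereal_scope.

Definition law {U : T -> R} (mU : measurable_fun setT U) : probability R R :=
  distribution P (mfun_Sub (mem_set mU : U \in mfun)).

Lemma law_itv {U : T -> R} (mU : measurable_fun setT U) t :
  law mU `]-oo, t]%classic = P [set w | (U w <= t)%R].
Proof. by rewrite -preim_itv_le. Qed.

Lemma law_sum {U V : T -> R} (mU : measurable_fun setT U) (mV : measurable_fun setT V) :
  (forall A B, measurable A -> measurable B ->
     P (U @^-1` A `&` V @^-1` B) = P (U @^-1` A) * P (V @^-1` B)) ->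
  forall z, P [set w | (U w + V w <= z)%R] = conv (law mU) (law mV) z.
Proof.
move=> UV_indep z.
have mUV : measurable_fun setT (fun w => (U w, V w)) by exact: measurable_fun_pair.
pose Q := distribution P (mfun_Sub (mem_set mUV : (fun w => (U w, V w)) \in mfun)).
rewrite /conv (product_measure_unique (m' := Q)) //.
exact: sum_le_set_measurable.
Qed.

Lemma partial_sum_cdf_le {I I' : eqType} {X : I -> T -> R} {Y : I' -> T -> R}
  (hX : mutual_indep P X) (hY : mutual_indep P Y) {e : nat -> I} {e' : nat -> I'}
  (ie : injective e) (ie' : injective e') :
  (forall k t, P [set w | (X (e k) w <= t)%R] <= P [set w | (Y (e' k) w <= t)%R]) ->
  forall m t, P [set w | (partial_sum X e m w <= t)%R] <=
              P [set w | (partial_sum Y e' m w <= t)%R].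
Proof.
move=> le_XY; elim=> [|m IH] t; first by rewrite !partial_sum0.
rewrite !partial_sumS.
have mS := partial_sum_measurable hX e m; have mS' := partial_sum_measurable hY e' m.
have mXm := hX.1 (e m); have mYm := hY.1 (e' m).
rewrite (law_sum mS mXm) ?(law_sum mS' mYm); last 2 first.
- by move=> A B mA mB; exact: partial_sum_indep.
- by move=> A B mA mB; exact: partial_sum_indep.
apply: (@le_trans _ _ (conv (law mS) (law mYm) t)).
  by apply: conv_le => s; rewrite !law_itv; exact: le_XY.
by rewrite conv_sym [leRHS]conv_sym; apply: conv_le => s; rewrite !law_itv; exact: IH.
Qed.

End SumsOfIndependent.

Section CompoundLaws.
Context {d : measure_display} {T : measurableType d} {R : realType}
  {P : probability T R}.
Local Open Scope ereal_scope.

Lemma max2_cdf {X Y : T -> R} : is_max2_law P X Y ->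
  forall z, P [set w | (Y w <= z)%R] =
            P [set w | (X w <= z)%R] * P [set w | (X w <= z)%R].
Proof.
move=> [X12 [hi [hl hY]]] z; rewrite (same_law_cdf hY).
have -> : [set w | (Num.max (X12 true w) (X12 false w) <= z)%R] =
    [set w | forall i, i \in [:: true; false] -> `]-oo, z]%classic (X12 i w)].
  apply/seteqP; split => w /=; rewrite ge_max.
    by move=> /andP[h1 h2] [] _ /=; rewrite in_itv /= ?h1 ?h2.
  move=> h; have := h true; have := h false; rewrite /= !in_itv /= !inE eqxx orbT.
  by move=> /(_ isT) -> /(_ isT) ->.
rewrite (hi.2 _ (fun _ => `]-oo, z]%classic)) //.
by rewrite !big_cons big_nil mule1 !preim_itv_le !(same_law_cdf (hl _)).
Qed.

Lemma geom_sum_cdf {K : T -> nat} {Xs : nat -> T -> R}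
  (h : mutual_indep P (fun i : option nat =>
      match i with None => fun w => (K w)%:R | Some k => Xs k end))
  {Y : T -> R} (hY : same_law P Y (fun w => (\sum_(k < K w) Xs k w)%R)) z :
  P [set w | (Y w <= z)%R] = \sum_(m <oo)
    (P [set w | K w = m] * P [set w | (\sum_(k < m) Xs k w <= z)%R]).
Proof.
set F := (fun i : option nat => _) in h.
have mK := nat_event_measurable (h.1 None).
have mS m := cdf_measurable (partial_sum_measurable h Some m) z.
rewrite (same_law_cdf hY) (prob_decomp_nat _ (fun m =>
  [set w | (partial_sum F Some m w <= z)%R])) //.
apply: eq_eseriesr => m _.
have u : uniq ([:: None] ++ map Some (iota 0 m)).
  by rewrite /= (map_inj_uniq (@Some_inj _)) iota_uniq andbT; apply/mapP => -[].
apply: (generated_indep h u); last exact: partial_sum_cylinder.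
rewrite (nat_eventE (R := R)); apply: generated_preimage; last exact: measurable_set1.
exact: coordinate_generated_measurable (mem_head _ _).
Qed.

Lemma maxgeom_sum_cdf {K : bool -> T -> nat} {Xs : nat -> T -> R}
  (h : mutual_indep P (fun i : bool + nat =>
      match i with inl b => fun w => (K b w)%:R | inr j => Xs j end))
  {Y : T -> R}
  (hY : same_law P Y (fun w => (\sum_(j < maxn (K true w) (K false w)) Xs j w)%R)) z :
  P [set w | (Y w <= z)%R] = \sum_(a <oo) \sum_(b <oo)
    (P [set w | K true w = a] * P [set w | K false w = b] *
     P [set w | (\sum_(k < maxn a b) Xs k w <= z)%R]).
Proof.
set F := (fun i : bool + nat => _) in h.
have mK b := nat_event_measurable (h.1 (inl b)).
have mS m := cdf_measurable (partial_sum_measurable h inr m) z.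
pose S m := [set w | (partial_sum F inr m w <= z)%R].
rewrite (same_law_cdf hY) (prob_decomp_nat2 _ _ (fun a b => S (maxn a b))) //; last first.
  by move=> a b; exact: mS.
apply: eq_eseriesr => a _; apply: eq_eseriesr => b _.
pose J1 := [:: inl true; inl false] : seq (bool + nat).
pose A (i : bool + nat) : set R :=
  match i with inl true => [set a%:R] | inl false => [set b%:R] | inr _ => setT end.
have mA i : measurable (A i) by case: i => [[]|] //= *; exact: measurable_set1.
have KabE : [set w | K true w = a] `&` [set w | K false w = b] =
    [set w | forall i, i \in J1 -> A i (F i w)].
  rewrite !(nat_eventE (R := R)); apply/seteqP; split => w /= => [[ha hb] [[]|j]|hw] //.
  by split; [apply: (hw (inl true)) | apply: (hw (inl false))]; rewrite !inE eqxx ?orbT.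
have u : uniq (J1 ++ map inr (iota 0 (maxn a b))).
  rewrite /= (map_inj_uniq (@inr_inj _ _)) iota_uniq andbT !inE /=.
  by apply/andP; split; apply/mapP => -[].
rewrite (generated_indep h u); last 2 first.
- by apply: sub_sigma_algebra; exists A; rewrite KabE.
- exact: partial_sum_cylinder.
by rewrite KabE h.2 // !big_cons big_nil mule1 !(nat_eventE (R := R)).
Qed.

End CompoundLaws.

(* The real inequality behind the induction step: if 0 <= G <= H pointwise
   with G <= 1, then (sum_a p_a G_a)^2 <= sum_a sum_b p_a p_b H_(max a b),
   since G_a G_b <= G_(max a b). *)
Lemma square_series_le {R : realType} (p G H : nat -> R) :
  (forall m, 0 <= p m) -> (forall m, 0 <= G m <= 1) -> (forall m, G m <= H m) ->
  (\sum_(a <oo) (p a * G a)%:E)%E \is a fin_num ->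
  ((\sum_(a <oo) (p a * G a)%:E) * (\sum_(a <oo) (p a * G a)%:E) <=
    \sum_(a <oo) \sum_(b <oo) (p a * p b * H (maxn a b))%:E)%E.
Proof.
move=> p0 G01 GH fin_sum.
have pG0 a : 0 <= p a * G a by apply: mulr_ge0 => //; case/andP: (G01 a).
set S := (\sum_(a <oo) (p a * G a)%:E)%E in fin_sum *.
have S0 : 0 <= fine S by apply: fine_ge0; apply: nneseries_ge0 => i _ /=; rewrite lee_fin.
rewrite -{1}(fineK fin_sum) -nneseriesZl; last by move=> i _ /=; rewrite lee_fin.
apply: lee_nneseries => [a _ _|a _]; first by rewrite -EFinM lee_fin mulr_ge0.
rewrite (fineK fin_sum) /S muleC -nneseriesZl; last by move=> i _ /=; rewrite lee_fin.
apply: lee_nneseries => [b _ _|b _]; first by rewrite -EFinM lee_fin mulr_ge0.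
rewrite -EFinM lee_fin.
have [/andP[Ga0 Ga1] /andP[Gb0 Gb1]] := (G01 a, G01 b).
have GG : G a * G b <= G (maxn a b) by case: leqP => _; nra.
rewrite mulrACA; apply: ler_wpM2l; first exact: mulr_ge0.
exact: le_trans GG (GH _).
Qed.

Section InductionStep.
Context {d : measure_display} {T : measurableType d} {R : realType}
  {P : probability T R}.
Local Open Scope ereal_scope.

Lemma max_geom_sum_cdf_le {q : R} {X X' T' M' R' : T -> R} :
  measurable_fun setT T' ->
  is_geom_sum_law P q X T' -> is_max2_law P T' M' ->
  is_maxgeom_sum_law P q X' R' ->
  (forall t, P [set w | (X w <= t)%R] <= P [set w | (X' w <= t)%R]) ->
  forall z, P [set w | (M' w <= z)%R] <= P [set w | (R' w <= z)%R].
Proof.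
move=> mT' [K [Xs [hi [gK [hXs hY]]]]] hM [K2 [Xs' [hi' [gK2 [hXs' hY']]]]] le_X z.
have mK := hi.1 None; have mK2 b := hi'.1 (inl b).
have mSM m := cdf_measurable (partial_sum_measurable hi Some m) z.
have mSR m := cdf_measurable (partial_sum_measurable hi' inr m) z.
pose p m := fine (P [set w | K w = m]).
pose G m := fine (P [set w | (\sum_(k < m) Xs k w <= z)%R]).
pose H m := fine (P [set w | (\sum_(k < m) Xs' k w <= z)%R]).
have GH m : (G m <= H m)%R.
  rewrite /G /H fine_le //; [by rewrite (prob_fin (mSM m))|by rewrite (prob_fin (mSR m))|].
  have := partial_sum_cdf_le hi hi' (@Some_inj _) (@inr_inj _ _) _ m z.
  apply => k t /=.
  by rewrite (same_law_cdf (hXs k)) (same_law_cdf (hXs' k)).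
have cdfT' : P [set w | (T' w <= z)%R] = \sum_(a <oo) (p a * G a)%:E.
  rewrite (geom_sum_cdf hi hY z); apply: eq_eseriesr => m _.
  by rewrite (prob_fin (nat_event_measurable mK m)) (prob_fin (mSM m)) -EFinM.
have cdfR' : P [set w | (R' w <= z)%R] =
    \sum_(a <oo) \sum_(b <oo) (p a * p b * H (maxn a b))%:E.
  rewrite (maxgeom_sum_cdf hi' hY' z).
  apply: eq_eseriesr => a _; apply: eq_eseriesr => b _.
  rewrite !(geometric_law_unique (mK2 _) mK (gK2 _) gK).
  rewrite (prob_fin (nat_event_measurable mK a)) (prob_fin (nat_event_measurable mK b)).
  by rewrite (prob_fin (mSR _)) -!EFinM.
rewrite (max2_cdf hM z) cdfT' cdfR'; apply: square_series_le => //.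
- by move=> m; rewrite /p fine_ge0.
- by move=> m; exact: prob_fine01 (mSM m).
- by rewrite -cdfT' (prob_fin (cdf_measurable mT' z)).
Qed.

End InductionStep.

Theorem lemma11 (d : measure_display) (T : measurableType d) (R : realType)
    (P : probability T R) (pgen pswap : R)
    (Tn Mn Rn : nat -> T -> R) :
  0 < pgen < 1 -> 0 < pswap <= 1 ->
  (forall n, measurable_fun setT (Tn n)) ->
  (forall n, measurable_fun setT (Mn n)) ->
  (forall n, measurable_fun setT (Rn n)) ->
  (geometric_real P pgen (Tn 0%N) \/ exponential_real P pgen (Tn 0%N)) ->
  (forall n, is_max2_law P (Tn n) (Mn n)) ->
  (forall n, is_geom_sum_law P pswap (Mn n) (Tn n.+1)) ->
  is_max2_law P (Tn 0%N) (Rn 0%N) ->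
  (forall n, is_maxgeom_sum_law P pswap (Rn n) (Rn n.+1)) ->
  forall (n : nat) (z : R),
    (P [set w | (z < Rn n w)%R] <= P [set w | (z < Mn n w)%R])%E.
Proof.
move=> _ _ mT mM mR _ hM hT hR0 hR n.
have cdf_le m z :
    (P [set w | (Mn m w <= z)%R] <= P [set w | (Rn m w <= z)%R])%E.
  elim: m z => [|m IH] z.
    by rewrite (max2_cdf (hM 0%N) z) (max2_cdf hR0 z).
  exact: (max_geom_sum_cdf_le (mT m.+1) (hT m) (hM m.+1) (hR m) IH).
exact: (tail_le_of_cdf_ge (mM n) (mR n) (cdf_le n)).
Qed.
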